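(* Let $G=(V,E)$ be a simple directed graph with at least one double edge, and let $T^u=p_{\mathrm{SEF}}T^u_{\mathrm{SEF}}+p_{\mathrm{DEM}}T^u_{\mathrm{DEM}}+p_{\mathrm{CP}}T^u_{\mathrm{CP}}+p_{\mathrm{CS}}T^u_{\mathrm{CS}}$ with $(p_{\mathrm{SEF}},p_{\mathrm{DEM}},p_{\mathrm{CP}},p_{\mathrm{CS}})$ a probability vector with positive entries. Then the Markov chain on the state space $\mathcal{G}_0^\infty(G)$ with transition matrix $T^u$ started at $G$ is ergodic (irreducible and aperiodic) and has the uniform distribution on $\mathcal{G}_0^\infty(G)$ as its equilibrium distribution.
   Context: A simple directed graph is $G=(V,E)$ with $V$ finite and $E\subseteq (V\times V)\setminus\{(v,v)\}$. $(i,j)\in E$ is a single edge if $(j,i)\notin E$; an ordered pair $(k,l)$ is a double edge if $(k,l),(l,k)\in E$. $\mathrm{pr}(V,E)=(V,\{\{u,v\}:(u,v)\in E\})$. $\mathcal{G}_0^\infty(G)$ is the set of simple directed graphs on $V$ with the same underlying undirected graph and the same number of directed edges as $G$. A clique is a vertex set in which every two distinct vertices are joined by an edge in some direction; maximal cliques depend only on $\mathrm{pr}(G)$. For a permutation $\pi$, $\pi((i,j))=(\pi(i),\pi(j))$. Moves: $\mathrm{SEF}_{i,j}(V,E)=(V,(E\setminus\{(i,j)\})\cup\{(j,i)\})$ for a single edge $(i,j)$; $\mathrm{DEM}^{k,l}_{i,j}(V,E)=(V,(E\setminus\{(k,l)\})\cup\{(j,i)\})$ for a single edge $(i,j)$ and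 double edge $(k,l)$; for a maximal clique $V_m$ with induced edges $E_m$ and a permutation $\pi$ of $V_m$, $\mathrm{CP}^\pi_m(V,E)=(V,(E\setminus E_m)\cup\pi(E_m))$; for equal-sized maximal cliques $V_1,V_2$ with induced edge sets $E_1,E_2$ and a permutation $\pi$ of $V_1\cup V_2$ with $\pi(V_1)=V_2,\pi(V_2)=V_1$, $\mathrm{CS}^\pi_{V_1,V_2}(V,E)=(V,(E\setminus(E_1\cup E_2))\cup\pi(E_1\cup E_2))$. Transition matrices: $T^u_{\mathrm{SEF}}(H,H')$ = probability that a uniformly drawn single edge $(i,j)$ of $H$ gives $\mathrm{SEF}_{i,j}(H)=H'$; $T^u_{\mathrm{DEM}}(H,H')$ = probability that a uniformly drawn single edge and an independently uniformly drawn double edge of $H$ give $\mathrm{DEM}^{k,l}_{i,j}(H)=H'$ (if a move has no eligible edges in $H$, it leaves $H$ unchanged). Fix a probability distribution $(p_d)$ on the sizes of maximal cliques of $\mathrm{pr}(G)$. $T^u_{\mathrm{CP}}(H,H')$ = probability that drawing $d\sim p_d$, then a maximal clique of size $d$ uniformly, then a permutation of it uniformly, yields $H'$ via CP; $T^u_{\mathrm{CS}}(H,H')$ = probability that drawing $d\sim p_d$, then two maximal cliques $V_1,V_2$ of size $d$ uniformly and independently, then $\pi$ uniformly among permutations of $V_1\cup V_2$ with $\pi(V_1)=V_2,\pi(V_2)=V_1$, yields $H'$ via CS. *)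

From HB Require Import structures.
From mathcomp Require Import all_boot all_order all_algebra all_fingroup.
Set Implicit Arguments. Unset Strict Implicit. Unset Printing Implicit Defensive.
Import Order.TTheory GRing.Theory Num.Theory.
Local Open Scope ring_scope.

(* A directed graph on a finite vertex type V is represented by its edge set
   E : {set V * V}; it is simple iff it has no loops. *)
Section Graphs.
Variable V : finType.
Notation edges := {set V * V}.

Definition loopless (E : edges) : bool := [forall v : V, (v, v) \notin E].

(* pr(V,E): the underlying undirected graph, as a set of unordered pairs. *)
Definition pr (E : edges) : {set {set V}} := [set [set e.1; e.2] | e in E].

Definition state_space (E : edges) : {set edges} :=
  [set E' : edges | [&& loopless E', pr E' == pr E & #|E'| == #|E|]].

Definition single_edges (E : edges) : edges := [set e in E | (e.2, e.1) \notin E].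
Definition double_edges (E : edges) : edges := [set e in E | (e.2, e.1) \in E].

Definition adj (E : edges) (u v : V) : bool :=
  (u != v) && (((u, v) \in E) || ((v, u) \in E)).
Definition is_clique (E : edges) (C : {set V}) : bool :=
  [forall u in C, forall v in C, (u != v) ==> adj E u v].
Definition is_max_clique (E : edges) (C : {set V}) : bool :=
  is_clique E C && [forall C' : {set V}, ((C \proper C') ==> ~~ is_clique E C')].
Definition max_cliques_of_size (E : edges) (d : nat) : {set {set V}} :=
  [set C : {set V} | is_max_clique E C && (#|C| == d)].
Definition is_max_clique_size (E : edges) (d : nat) : bool :=
  max_cliques_of_size E d != set0.

Definition SEF (e : V * V) (E : edges) : edges := (E :\ e) :|: [set (e.2, e.1)].
Definition DEM (e f : V * V) (E : edges) : edges := (E :\ f) :|: [set (e.2, e.1)].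
Definition induced (E : edges) (C : {set V}) : edges :=
  [set e in E | (e.1 \in C) && (e.2 \in C)].
Definition perm_edges (s : {perm V}) (A : edges) : edges :=
  [set (s e.1, s e.2) | e in A].
Definition CP (s : {perm V}) (C : {set V}) (E : edges) : edges :=
  (E :\: induced E C) :|: perm_edges s (induced E C).
Definition CS (s : {perm V}) (C1 C2 : {set V}) (E : edges) : edges :=
  (E :\: (induced E C1 :|: induced E C2))
    :|: perm_edges s (induced E C1 :|: induced E C2).

Definition perms_of (C : {set V}) : {set {perm V}} := [set s | perm_on C s].
Definition swap_perms (C1 C2 : {set V}) : {set {perm V}} :=
  [set s | [&& perm_on (C1 :|: C2) s, s @: C1 == C2 & s @: C2 == C1]].

Variable R : realFieldType.

Definition T_SEF (H H' : edges) : R :=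
  if single_edges H == set0 then (H == H')%:R
  else #|[set e in single_edges H | SEF e H == H']|%:R / #|single_edges H|%:R.

Definition T_DEM (H H' : edges) : R :=
  if (single_edges H == set0) || (double_edges H == set0) then (H == H')%:R
  else #|[set ef in setX (single_edges H) (double_edges H) | DEM ef.1 ef.2 H == H']|%:R
       / (#|single_edges H| * #|double_edges H|)%:R.

(* p : distribution on the sizes of maximal cliques *)
Definition T_CP (p : nat -> R) (H H' : edges) : R :=
  \sum_(d < #|V|.+1)
    p d * (\sum_(C in max_cliques_of_size H d)
            (#|max_cliques_of_size H d|%:R)^-1 *
            (#|[set s in perms_of C | CP s C H == H']|%:R / #|perms_of C|%:R)).

Definition T_CS (p : nat -> R) (H H' : edges) : R :=
  \sum_(d < #|V|.+1)
    p d * (\sum_(C1 in max_cliques_of_size H d) \sum_(C2 in max_cliques_of_size H d)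
            (#|max_cliques_of_size H d|%:R ^+ 2)^-1 *
            (#|[set s in swap_perms C1 C2 | CS s C1 C2 H == H']|%:R
               / #|swap_perms C1 C2|%:R)).

Definition T_u (pSEF pDEM pCP pCS : R) (p : nat -> R) (H H' : edges) : R :=
  pSEF * T_SEF H H' + pDEM * T_DEM H H' + pCP * T_CP p H H' + pCS * T_CS p H H'.

End Graphs.

Section Markov.
Variables (U : finType) (R : realFieldType) (S : {set U}) (T : U -> U -> R).

Fixpoint mpow (n : nat) (x y : U) : R :=
  match n with
  | 0 => (x == y)%:R
  | n'.+1 => \sum_(z in S) mpow n' x z * T z y
  end.

Definition irreducible : Prop :=
  forall x y, x \in S -> y \in S -> exists n, 0 < mpow n x y.

Definition aperiodic : Prop :=
  forall x, x \in S ->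
    forall d : nat, (forall n : nat, (0 < n)%N -> 0 < mpow n x x -> (d %| n)%N) -> d = 1%N.

Definition ergodic : Prop := irreducible /\ aperiodic.

Definition stationary (pi : U -> R) : Prop :=
  forall y, y \in S -> \sum_(x in S) pi x * T x y = pi y.

Definition uniform_on (x : U) : R := (#|S|%:R)^-1.
End Markov.

From HB Require Import structures.
From mathcomp Require Import all_boot all_order all_algebra all_fingroup.
From mathcomp Require Import zify lra.
Import Order.TTheory GRing.Theory Num.Theory.
Set Implicit Arguments. Unset Strict Implicit. Unset Printing Implicit Defensive.

(* Every move keeps a graph in G_0^infty(G): it preserves the underlying
   undirected graph and the number of edges, hence also the numbers of single
   and double edges and the maximal cliques.  Every move is undone by a move
   of the same kind that is drawn with the same probability (flip back, move
   the double edge back, apply the inverse permutation), so T^u is symmetric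
   on the state space; being stochastic, it has the uniform distribution as
   equilibrium.  The identity permutation of a clique gives every state a
   loop, whence aperiodicity.  For irreducibility, if H <> H' then some edge a
   of H is missing from H' while its reverse lies in H'; flipping a, if it is
   single, or otherwise moving the double edge a onto an edge of H' missing
   from H, strictly decreases #|H :\: H'|. *)

Section PositiveSums.
Local Open Scope ring_scope.

Lemma psumr_gt0 (R : numDomainType) (I : finType) (P : pred I) (F : I -> R) i :
  (forall j, P j -> 0 <= F j) -> P i -> 0 < F i -> 0 < \sum_(j | P j) F j.
Proof.
move=> F_ge0 Pi Fi_gt0; rewrite lt_def sumr_ge0 // andbT psumr_neq0 //.
by apply/hasP; exists i; rewrite ?mem_index_enum ?Pi.
Qed.

End PositiveSums.

Section FiniteChains.
Variables (U : finType) (R : realFieldType) (S : {set U}) (T : U -> U -> R).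
Local Open Scope ring_scope.

Lemma mpow1 x y : x \in S -> mpow S T 1 x y = T x y.
Proof.
move=> Sx; rewrite /= (bigD1 x) //= eqxx mul1r big1 ?addr0 // => z /andP [_ /negbTE].
by rewrite eq_sym => ->; rewrite mul0r.
Qed.

Lemma aperiodic_of_loops : {in S, forall x, 0 < T x x} -> aperiodic S T.
Proof.
move=> loopT x Sx d dvd_d; apply/eqP; rewrite -dvdn1.
by apply: dvd_d; rewrite ?mpow1 ?loopT.
Qed.

Lemma stationary_uniform :
  {in S &, forall x y, T x y = T y x} -> {in S, forall x, \sum_(y in S) T x y = 1} ->
  stationary S T (uniform_on R S).
Proof.
move=> symT sumT y Sy; rewrite /uniform_on -mulr_sumr.
under eq_bigr => x Sx do rewrite symT //.
by rewrite sumT // mulr1.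
Qed.

Hypothesis T_ge0 : forall x y, 0 <= T x y.

Lemma mpow_ge0 n x y : 0 <= mpow S T n x y.
Proof.
elim: n y => [|n IHn] y /=; first exact: ler0n.
by apply: sumr_ge0 => z _; rewrite mulr_ge0.
Qed.

Lemma mpowS_gt0 n x y z :
  0 < mpow S T n x z -> z \in S -> 0 < T z y -> 0 < mpow S T n.+1 x y.
Proof.
move=> xz_gt0 Sz zy_gt0; apply: (psumr_gt0 _ Sz); last exact: mulr_gt0.
by move=> w _; rewrite mulr_ge0 ?mpow_ge0.
Qed.

Lemma irreducible_by_descent (dist : U -> U -> nat) :
  (forall x y, x \in S -> y \in S -> x != y ->
     exists2 z, z \in S & (0 < T z y) && (dist x z < dist x y)%N) ->
  irreducible S T.
Proof.
move=> descent x y Sx; move: {2}(dist x y) (erefl (dist x y)) => k.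
elim/ltn_ind: k y => k IHk y def_k Sy.
have [<-|neq_xy] := eqVneq x y; first by exists 0%N; rewrite /= eqxx ltr01.
have [z Sz /andP [zy_gt0]] := descent x y Sx Sy neq_xy; rewrite def_k => lt_zk.
have [n xz_gt0] := IHk _ lt_zk z erefl Sz.
by exists n.+1; apply: mpowS_gt0 xz_gt0 Sz zy_gt0.
Qed.

End FiniteChains.

Lemma sum_card_fibers (I U : finType) (D : {set I}) (S : {set U}) (f : I -> U) :
  {in D, forall i, f i \in S} -> \sum_(y in S) #|[set i in D | f i == y]| = #|D|.
Proof.
move=> fDS; rewrite -sum1_card (partition_big f (mem S)) //=.
by apply: eq_bigr => y _; rewrite -sum1_card; apply: eq_bigl => i; rewrite inE.
Qed.

Lemma card_swap_eq (I U : finType) (A : U -> U -> {set I}) (g : I -> I) (P : pred U) :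
  injective g -> (forall x y i, P x -> P y -> i \in A x y -> g i \in A y x) ->
  forall x y, P x -> P y -> #|A x y| = #|A y x|.
Proof.
move=> g_inj gA.
have le_A x y : P x -> P y -> #|A x y| <= #|A y x|.
  move=> Px Py; rewrite -(card_imset _ g_inj); apply: subset_leq_card.
  by apply/subsetP => _ /imsetP [i Ai ->]; apply: gA.
by move=> x y Px Py; apply/eqP; rewrite eqn_leq !le_A.
Qed.

Section FiberRatios.
Variable R : realFieldType.
Local Open Scope ring_scope.

Lemma sum_fiber_ratios (I U : finType) (D : {set I}) (S : {set U}) (f : I -> U) :
  {in D, forall i, f i \in S} -> D != set0 ->
  \sum_(y in S) (#|[set i in D | f i == y]|%:R / #|D|%:R) = 1 :> R.
Proof.
move=> fDS D_neq0; rewrite -mulr_suml -natr_sum sum_card_fibers // mulfV //.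
by rewrite pnatr_eq0 cards_eq0.
Qed.

Lemma sum_delta (U : finType) (S : {set U}) x :
  x \in S -> \sum_(y in S) ((x == y)%:R : R) = 1.
Proof.
move=> Sx; rewrite (bigD1 x) //= eqxx big1 ?addr0 // => y /andP [_].
by rewrite eq_sym => /negbTE ->.
Qed.

Lemma sum_inv_card (U : finType) (M : {set U}) :
  \sum_(C in M) (#|M|%:R^-1 : R) = (M != set0)%:R.
Proof.
rewrite sumr_const -[_ *+ _]mulr_natl; have [->|M_neq0] := eqVneq M set0.
  by rewrite cards0 mul0r.
by rewrite mulfV // pnatr_eq0 cards_eq0.
Qed.

Lemma sum_inv_card2 (U : finType) (M : {set U}) :
  \sum_(C1 in M) \sum_(C2 in M) ((#|M|%:R ^+ 2)^-1 : R) = (M != set0)%:R.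
Proof.
under eq_bigr do rewrite -exprVn expr2 -mulr_sumr sum_inv_card.
by rewrite -mulr_suml sum_inv_card; case: (M != set0); rewrite ?mulr1 ?mulr0.
Qed.

End FiberRatios.

Section SwapPerms.
Variable V : finType.
Implicit Types (X Y C : {set V}).

Lemma perm_onS (A B : {set V}) (t : {perm V}) : perm_on A t -> A \subset B -> perm_on B t.
Proof. exact: subset_trans. Qed.

Lemma exists_swap_disjoint X Y : #|X| = #|Y| -> [disjoint X & Y] ->
  exists s : {perm V}, [/\ perm_on (X :|: Y) s, s @: X = Y & s @: Y = X].
Proof.
move: {2}#|X| (erefl #|X|) => n; elim: n X Y => [|n IHn] X Y cardX cardY disjXY.
  have [-> ->] : X = set0 /\ Y = set0 by split; apply/eqP; rewrite -cards_eq0 -?cardY cardX.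
  by exists 1%g; rewrite perm_on1 imset0.
have [x Xx] : exists x, x \in X by apply/card_gt0P; rewrite cardX.
have [y Yy] : exists y, y \in Y by apply/card_gt0P; rewrite -cardY cardX.
have YNx := disjointFr disjXY Xx; have XNy := disjointFl disjXY Yy.
have cardXx : #|X :\ x| = n by move: cardX; rewrite (cardsD1 x X) Xx add1n => -[].
have cardYy : #|Y :\ y| = n by move: cardY; rewrite cardX (cardsD1 y Y) Yy add1n => -[->].
have disjXYxy := disjointWl (subD1set X x) (disjointWr (subD1set Y y) disjXY).
have [s' [on_s' s'X s'Y]] := IHn _ _ cardXx (etrans cardXx (esym cardYy)) disjXYxy.
have fix_s' z : z \in [set x; y] -> s' z = z.
  move=> xy_z; apply: (out_perm on_s').
  by case/set2P: xy_z => ->; rewrite !inE ?eqxx ?YNx ?XNy ?andbF.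
have fix_t z : z \in (X :\ x) :|: (Y :\ y) -> tperm x y z = z.
  rewrite !inE => /orP [] /andP [neq_zx Xz]; rewrite tpermD // 1?eq_sym //.
  - by apply: contraFneq XNy => <-.
  - by apply: contraFneq YNx => <-.
pose s := (tperm x y * s')%g.
have s_on (A B : {set V}) : A \subset (X :\ x) :|: (Y :\ y) -> s' @: A = B -> s @: A = B.
  move=> subA <-; apply: eq_in_imset => z /(subsetP subA) XYz.
  by rewrite permM fix_t.
exists s; split.
- apply: perm_onM; [apply: perm_onS (tperm_on x y) _ | apply: perm_onS on_s' _].
    by apply/subsetP => z /set2P [] ->; rewrite inE ?Xx ?Yy ?orbT.
  by rewrite setUSS ?subD1set.
- rewrite -(setD1K Xx) -(setD1K Yy) imsetU1 (s_on _ _ _ s'X) ?subsetUl //.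
  by rewrite permM tpermL fix_s' // set22.
- rewrite -(setD1K Xx) -(setD1K Yy) imsetU1 (s_on _ _ _ s'Y) ?subsetUr //.
  by rewrite permM tpermR fix_s' // set21.
Qed.

Lemma swap_perms_neq0 C1 C2 : #|C1| = #|C2| -> swap_perms C1 C2 != set0.
Proof.
move=> eq_card.
have card_diff : #|C1 :\: C2| = #|C2 :\: C1|.
  by move: eq_card; rewrite -(cardsID C2 C1) -(cardsID C1 C2) setIC => /addnI.
have disj : [disjoint C1 :\: C2 & C2 :\: C1].
  rewrite -setI_eq0; apply/eqP/setP => z; rewrite !inE.
  by case: (z \in C1); case: (z \in C2).
have [s [on_s sX sY]] := exists_swap_disjoint card_diff disj.
have fix_s : {in C1 :&: C2, s =1 id}.
  by move=> z; rewrite inE => /andP [z1 z2]; apply: (out_perm on_s); rewrite !inE z1 z2.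
apply/set0Pn; exists s; rewrite inE; apply/and3P; split.
- by apply: perm_onS on_s _; rewrite setUSS ?subsetDl.
- by rewrite -{1}(setID C1 C2) imsetU sX (eq_in_imset fix_s) imset_id setIC setID.
- by rewrite -{1}(setID C2 C1) imsetU sY (setIC C2 C1) (eq_in_imset fix_s) imset_id setID.
Qed.

End SwapPerms.

Section EdgeSets.
Variable V : finType.
Implicit Types (H : {set V * V}) (e : V * V).

Definition erev e : V * V := (e.2, e.1).

Lemma erevK : involutive erev. Proof. by case. Qed.
Lemma erev_inj : injective erev. Proof. exact: inv_inj erevK. Qed.

Lemma in_single_edges H e : (e \in single_edges H) = (e \in H) && (erev e \notin H).
Proof. by rewrite inE. Qed.

Lemma in_double_edges H e : (e \in double_edges H) = (e \in H) && (erev e \in H).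
Proof. by rewrite inE. Qed.

Lemma card_single_double_edges H : #|single_edges H| + #|double_edges H| = #|H|.
Proof.
rewrite -(cardsID [set e | erev e \in H] H) addnC.
by congr (_ + _); apply: eq_card => e; rewrite !inE andbC.
Qed.

Lemma loopless_neq H e : loopless H -> e \in H -> e.1 != e.2.
Proof. by case: e => u v /forallP loopH; apply: contraTneq => /= ->. Qed.

Lemma loopless_erev_neq H e : loopless H -> e \in H -> erev e != e.
Proof. by case: e => u v loopH /(loopless_neq loopH); apply: contra => /eqP [->]. Qed.

Lemma set2C (a b : V) : [set a; b] = [set b; a].
Proof. by apply/setP => x; rewrite !inE orbC. Qed.

Lemma eq_set2 (a b c d : V) :
  [set a; b] = [set c; d] -> (a = c /\ b = d) \/ (a = d /\ b = c).
Proof.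
move=> eq2.
have : [/\ a \in [set c; d], b \in [set c; d], c \in [set a; b] & d \in [set a; b]].
  by split; rewrite ?eq2 ?set21 ?set22 // -eq2 ?set21 ?set22.
by case=> /set2P [] ? /set2P [] ? /set2P [] ? /set2P [] ?; subst; auto.
Qed.

Lemma mem_pr H u v : ([set u; v] \in pr H) = ((u, v) \in H) || ((v, u) \in H).
Proof.
apply/imsetP/orP => [[[x y] /= xyH /eq_set2 [[-> ->]|[-> ->]]]|]; [by left|by right|].
by case=> [uvH|vuH]; [exists (u, v)|exists (v, u); rewrite // set2C].
Qed.

Lemma pr_subsetP H1 H2 :
  reflect (forall e, e \in H1 -> (e \in H2) || (erev e \in H2)) (pr H1 \subset pr H2).
Proof.
apply: (iffP subsetP) => [sub12 [u v] uvH1|sub12 _ /imsetP [[u v] /sub12 uvH2 ->]].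
  by rewrite -mem_pr sub12 // mem_pr uvH1.
by rewrite mem_pr.
Qed.

End EdgeSets.
Arguments erev {V}.
Arguments erevK {V}.
Arguments erev_inj {V}.

Section EdgeCounting.
Variable V : finType.
Variable H : {set V * V}.
Hypothesis loopH : loopless H.

(* Any strict total order on V picks one orientation of each double edge. *)
Definition ascending : {set V * V} := [set e | (enum_rank e.1 < enum_rank e.2)%N].

Let D := double_edges H :\: ascending.

Lemma descending_double_edges : D = erev @: (double_edges H :&: ascending).
Proof.
rewrite (can_imset_pre _ (@erevK V)); apply/setP => -[u v]; rewrite !inE /= andbC.
have [uvH|] := boolP ((u, v) \in H); rewrite ?andbF //= !andbT.
rewrite -leqNgt leq_eqVlt val_eqE (inj_eq enum_rank_inj) eq_sym.
by rewrite (negbTE (loopless_neq loopH uvH)).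
Qed.

Lemma card_pr : #|pr H| + #|D| = #|H|.
Proof.
have subDH : D \subset H by apply/subsetP => e; rewrite !inE => /and3P [].
rewrite -(cardsID D H) (setIidPr subDH) addnC; congr (_ + _).
have -> : pr H = [set [set e.1; e.2] | e in H :\: D].
  apply/eqP; rewrite eqEsubset andbC imsetS ?subsetDl //=.
  apply/subsetP => _ /imsetP [e eH ->]; have [eD|eND] := boolP (e \in D); last first.
    by apply/imsetP; exists e; rewrite // inE eND.
  move: eD; rewrite {1}descending_double_edges => /imsetP [[u v]].
  rewrite !inE /= => /andP [/andP [uvH vuH] asc_uv] ->.
  apply/imsetP; exists (u, v); last exact: set2C.
  by rewrite !inE /= uvH vuH asc_uv.
apply: card_in_imset => -[a b] [c d]; rewrite !inE /= => /andP [abD abH] /andP [cdD cdH].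
case/eq_set2 => [[-> ->] //|[ac bd]]; subst c d.
move: abD cdD; rewrite abH cdH !andbT !negbK => lt_ab /(ltn_trans lt_ab).
by rewrite ltnn.
Qed.

Lemma card_double_edges : #|double_edges H| = 2 * (#|H| - #|pr H|).
Proof.
have cardD : #|D| = #|double_edges H :&: ascending|.
  by rewrite descending_double_edges card_imset //; exact: erev_inj.
have := cardsID ascending (double_edges H); have := card_pr; rewrite -/D; lia.
Qed.

End EdgeCounting.

Section StateSpace.
Variables (V : finType) (E : {set V * V}).
Hypothesis loopE : loopless E.
Local Notation S := (state_space E).
Implicit Types (H : {set V * V}) (a c e f : V * V).

Lemma in_state_space H : (H \in S) = [&& loopless H, pr H == pr E & #|H| == #|E|].
Proof. by rewrite inE. Qed.

Lemma state_space_loopless H : H \in S -> loopless H.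
Proof. by rewrite in_state_space => /and3P []. Qed.

Lemma state_space_refl : E \in S.
Proof. by rewrite in_state_space loopE !eqxx. Qed.

Lemma card_double_edges_state H : H \in S -> #|double_edges H| = #|double_edges E|.
Proof.
move=> SH; have := SH; rewrite in_state_space => /and3P [loopH /eqP prH /eqP cardH].
by rewrite !card_double_edges // prH cardH.
Qed.

Lemma card_single_edges_state H : H \in S -> #|single_edges H| = #|single_edges E|.
Proof.
move=> SH; have := card_single_double_edges H; have := card_single_double_edges E.
have := card_double_edges_state SH; move: SH; rewrite in_state_space => /and3P [_ _ /eqP].
lia.
Qed.

Lemma adj_state_space H : H \in S -> adj H =2 adj E.
Proof.
by rewrite in_state_space => /and3P [_ /eqP prH _] u v; rewrite /adj -!mem_pr prH.
Qed.

Lemma max_cliques_state_space H d : H \in S ->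
  max_cliques_of_size H d = max_cliques_of_size E d.
Proof.
move=> /adj_state_space adjH.
have cliqueH C : is_clique H C = is_clique E C.
  by apply: eq_forallb => u; congr (_ ==> _); apply: eq_forallb => v; rewrite adjH.
apply/setP => C; rewrite !inE /is_max_clique cliqueH.
by congr (_ && _ && _); apply: eq_forallb => C'; rewrite cliqueH.
Qed.

Definition replace_edge a c H : {set V * V} := (H :\ a) :|: [set c].

Lemma replace_edgeK H a c : a \in H -> c \notin H ->
  replace_edge c a (replace_edge a c H) = H.
Proof.
move=> aH cNH; apply/setP => x; rewrite !inE.
have [->|xNa] := eqVneq x a; first by rewrite aH orbT.
by have [->|] := eqVneq x c; rewrite /= ?orbF // (negbTE cNH).
Qed.

Lemma card_replace_edge_diff H H' a c : a \in H -> a \notin H' -> c \in H' ->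
  #|replace_edge a c H :\: H'| < #|H :\: H'|.
Proof.
move=> aH aNH' cH'; apply: (@leq_ltn_trans #|(H :\: H') :\ a|).
  apply/subset_leq_card/subsetP => x; rewrite !inE => /andP [xNH' /orP [/andP [-> ->]|/eqP xc]].
    by rewrite xNH'.
  by rewrite xc cH' in xNH'.
by rewrite [X in _ < X](cardsD1 a) !inE aH aNH'.
Qed.

Lemma replace_edge_state_space H a c : H \in S -> a \in H -> c \notin H ->
  erev c \in H -> (erev a \in H) || (c == erev a) -> replace_edge a c H \in S.
Proof.
rewrite !in_state_space => /and3P [loopH /eqP prH /eqP cardH] aH cNH crevH arevH.
apply/and3P; split.
- apply/forallP => v; rewrite !inE (negbTE (forallP loopH v)) andbF /=.
  by apply: contraTneq crevH => <-; exact: (forallP loopH v).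
- rewrite -prH eqEsubset; apply/andP; split; apply/pr_subsetP => e; rewrite !inE.
    by case/orP => [/andP [_ ->]|/eqP ->]; rewrite ?crevH ?orbT.
  move=> eH; have [->|_] := eqVneq e a; last by rewrite eH.
  case/orP: arevH => [arevH|/eqP ->]; last by rewrite eqxx !orbT.
  by rewrite (loopless_erev_neq loopH aH) arevH !orbT.
- by rewrite /replace_edge setUC cardsU1 !inE negb_and cNH orbT -cardH (cardsD1 a H) aH.
Qed.

Lemma SEF_replace_edge e H : SEF e H = replace_edge e (erev e) H.
Proof. by []. Qed.

Lemma DEM_replace_edge e f H : DEM e f H = replace_edge f (erev e) H.
Proof. by []. Qed.

Lemma SEF_state_space H e : H \in S -> e \in single_edges H -> SEF e H \in S.
Proof.
move=> SH; rewrite in_single_edges => /andP [eH erevNH].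
by apply: replace_edge_state_space; rewrite ?erevK ?eqxx ?orbT.
Qed.

Lemma DEM_state_space H e f : H \in S -> e \in single_edges H ->
  f \in double_edges H -> DEM e f H \in S.
Proof.
move=> SH; rewrite in_single_edges in_double_edges => /andP [eH erevNH] /andP [fH frevH].
by apply: replace_edge_state_space; rewrite ?erevK ?frevH.
Qed.

Lemma SEFK H e : e \in single_edges H ->
  erev e \in single_edges (SEF e H) /\ SEF (erev e) (SEF e H) = H.
Proof.
rewrite in_single_edges => /andP [eH erevNH].
rewrite !SEF_replace_edge erevK replace_edgeK // in_single_edges erevK !inE eqxx /=.
by rewrite orbT eqxx; split=> //; apply: contraNneq erevNH => <-.
Qed.

Lemma DEMK H e f : loopless H -> e \in single_edges H -> f \in double_edges H ->
  [/\ erev f \in single_edges (DEM e f H), erev e \in double_edges (DEM e f H)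
    & DEM (erev f) (erev e) (DEM e f H) = H].
Proof.
move=> loopH; rewrite in_single_edges in_double_edges => /andP [eH erevNH] /andP [fH frevH].
rewrite !DEM_replace_edge erevK replace_edgeK // in_single_edges in_double_edges erevK.
have neq_f_erev_e : f != erev e by apply: contraNneq erevNH => <-.
have neq_e_f : e != f by apply: contraNneq erevNH => ->.
rewrite !inE eqxx erevK frevH eH (loopless_erev_neq loopH fH) neq_f_erev_e neq_e_f.
by rewrite /= eqxx orbT.
Qed.

End StateSpace.

Section SplitByPredicate.
Variables (T : finType) (P : pred T) (K : {set T}).

Lemma setU_predC : [set x in K | ~~ P x] :|: [set x in K | P x] = K.
Proof. by apply/setP => x; rewrite !inE; case: (P x); rewrite ?andbT ?andbF ?orbF. Qed.

Lemma card_predC : #|[set x in K | ~~ P x]| + #|[set x in K | P x]| = #|K|.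
Proof.
rewrite -{3}setU_predC cardsU; suff -> : [set x in K | ~~ P x] :&: [set x in K | P x] = set0.
  by rewrite cards0 subn0.
by apply/setP => x; rewrite !inE andbACA andNb andbF.
Qed.

End SplitByPredicate.

Section Relabel.
Variable V : finType.
Implicit Types (H : {set V * V}) (e : V * V) (s : {perm V}).

Definition perm_edge s e : V * V := (s e.1, s e.2).

Lemma perm_edgeK s : cancel (perm_edge s) (perm_edge s^-1).
Proof. by case=> u v; rewrite /perm_edge /= !permK. Qed.

Lemma perm_edgeKV s : cancel (perm_edge s^-1) (perm_edge s).
Proof. by case=> u v; rewrite /perm_edge /= !permKV. Qed.

Lemma perm_edge_inj s : injective (perm_edge s).
Proof. exact: can_inj (perm_edgeK s). Qed.

Lemma perm_edge_neq s e : ((perm_edge s e).1 != (perm_edge s e).2) = (e.1 != e.2).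
Proof. by rewrite /= (inj_eq perm_inj). Qed.

Definition complete_on (P : pred (V * V)) H :=
  forall e, e.1 != e.2 -> P e -> (e \in H) || (erev e \in H).

Definition relabel (P : pred (V * V)) s H : {set V * V} :=
  (H :\: [set e in H | P e]) :|: perm_edges s [set e in H | P e].

Variables (P : pred (V * V)) (s : {perm V}).
Hypothesis P_perm : forall e, P (perm_edge s e) = P e.

Lemma relabelE H :
  relabel P s H = [set e in H | ~~ P e] :|: perm_edge s @: [set e in H | P e].
Proof.
rewrite /relabel; congr (_ :|: _); apply/setP => e; rewrite !inE.
by case: (e \in H); case: (P e).
Qed.

Lemma perm_edges_P H e : e \in perm_edge s @: [set e in H | P e] -> P e.
Proof. by case/imsetP => a; rewrite inE => /andP [_ Pa] ->; rewrite P_perm. Qed.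

Lemma relabel_within H : [set e in relabel P s H | P e] = perm_edge s @: [set e in H | P e].
Proof.
apply/setP => e; rewrite relabelE !inE andb_orl -andbA andNb andbF /=.
by apply/andP/idP => [[] //|sPe]; split; last exact: perm_edges_P sPe.
Qed.

Lemma relabel_without H : [set e in relabel P s H | ~~ P e] = [set e in H | ~~ P e].
Proof.
apply/setP => e; rewrite relabelE !inE andb_orl -andbA andbb.
by have [/perm_edges_P -> | _] := boolP (e \in perm_edge s @: _); rewrite ?andbF orbF.
Qed.

End Relabel.

Lemma relabelK (V : finType) (P : pred (V * V)) (s : {perm V}) (H : {set V * V}) :
  (forall e, P (perm_edge s e) = P e) -> relabel P s^-1 (relabel P s H) = H.
Proof.
move=> P_perm; have P_permV e : P (perm_edge s^-1 e) = P e.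
  by rewrite -{2}(perm_edgeKV s e) P_perm.
rewrite relabelE // relabel_within // relabel_without // -imset_comp.
by rewrite (eq_imset _ (perm_edgeK s)) imset_id setU_predC.
Qed.

Section RelabelStateSpace.
Variables (V : finType) (E : {set V * V}) (P : pred (V * V)) (s : {perm V}).
Hypothesis P_perm : forall e, P (perm_edge s e) = P e.
Hypothesis P_erev : forall e, P (erev e) = P e.
Implicit Types (H : {set V * V}) (e : V * V).

Lemma pr_perm_edges H : loopless H -> complete_on P H ->
  pr (perm_edge s @: [set e in H | P e]) = pr [set e in H | P e].
Proof.
move=> loopH completeH; set A := [set e in H | P e].
have completeA : complete_on P A.
  by move=> e neq_e Pe; rewrite !inE P_erev Pe !andbT; exact: completeH.
apply/eqP; rewrite eqEsubset; apply/andP; split; apply/pr_subsetP.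
  move=> e /imsetP [a]; rewrite inE => /andP [aH Pa] ->.
  by apply: completeA; rewrite ?perm_edge_neq ?P_perm ?(loopless_neq loopH aH).
move=> e; rewrite inE => /andP [eH Pe].
have := perm_edgeKV s e; set a := perm_edge _ e => def_e.
have neq_a : a.1 != a.2 by rewrite -(perm_edge_neq s) def_e (loopless_neq loopH eH).
have Pa : P a by rewrite -P_perm def_e.
case/orP: (completeA a neq_a Pa) => [aA|raA]; apply/orP; [left|right]; apply/imsetP.
  by exists a.
by exists (erev a); rewrite // -def_e.
Qed.

Lemma relabel_state_space H : H \in state_space E -> complete_on P H ->
  relabel P s H \in state_space E.
Proof.
rewrite !in_state_space => /and3P [loopH /eqP prH /eqP cardH] completeH.
have prU H1 H2 : pr (H1 :|: H2) = pr H1 :|: pr H2 by exact: imsetU.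
apply/and3P; split.
- apply/forallP => v; rewrite relabelE // !inE negb_or (negbTE (forallP loopH v)) /=.
  apply/imsetP => -[a]; rewrite inE => /andP [aH _] vv.
  by have := loopless_neq loopH aH; rewrite -(perm_edge_neq s) -vv eqxx.
- by rewrite relabelE // prU pr_perm_edges // -prU setU_predC prH.
- rewrite -(card_predC P) relabel_within // relabel_without // card_imset.
    by rewrite card_predC cardH.
  exact: perm_edge_inj.
Qed.

End RelabelStateSpace.

Section CliqueMoves.
Variable V : finType.
Implicit Types (E H : {set V * V}) (C : {set V}) (s : {perm V}) (e : V * V).

Definition within C : pred (V * V) := fun e => (e.1 \in C) && (e.2 \in C).
Definition within2 C1 C2 : pred (V * V) := fun e => within C1 e || within C2 e.

Lemma CP_relabel s C H : CP s C H = relabel (within C) s H.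
Proof. by []. Qed.

Lemma CS_relabel s C1 C2 H : CS s C1 C2 H = relabel (within2 C1 C2) s H.
Proof.
rewrite /CS; suff -> : induced H C1 :|: induced H C2 = [set e in H | within2 C1 C2 e] by [].
by apply/setP => e; rewrite !inE andb_orr.
Qed.

Lemma within_erev C e : within C (erev e) = within C e.
Proof. exact: andbC. Qed.

Lemma within2_erev C1 C2 e : within2 C1 C2 (erev e) = within2 C1 C2 e.
Proof. by rewrite /within2 !within_erev. Qed.

Lemma within_perm_on C s e : perm_on C s -> within C (perm_edge s e) = within C e.
Proof. by move=> onC; rewrite /within /= !(perm_closed _ onC). Qed.

Lemma within2_swap C1 C2 s e :
  s \in swap_perms C1 C2 -> within2 C1 C2 (perm_edge s e) = within2 C1 C2 e.
Proof.
rewrite inE => /and3P [_ /eqP sC1 /eqP sC2].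
have sC x (A B : {set V}) : s @: A = B -> (s x \in B) = (x \in A).
  by move=> <-; rewrite mem_imset //; exact: perm_inj.
by rewrite /within2 /within /= !(sC _ _ _ sC1) !(sC _ _ _ sC2) orbC.
Qed.

Lemma clique_complete H C : is_clique H C -> complete_on (within C) H.
Proof.
move=> /forallP cliqueC [u v] neq_uv /andP [/= uC vC].
by have /forallP /(_ v) := implyP (cliqueC u) uC; rewrite vC neq_uv => /andP [].
Qed.

Lemma CP_state_space E H C s : H \in state_space E -> is_clique H C -> perm_on C s ->
  CP s C H \in state_space E.
Proof.
move=> SH cliqueC onC; apply: relabel_state_space => // [e|e|].
- exact: within_perm_on.
- exact: within_erev.
- exact: clique_complete.
Qed.

Lemma CS_state_space E H C1 C2 s : H \in state_space E ->
  is_clique H C1 -> is_clique H C2 -> s \in swap_perms C1 C2 ->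
  CS s C1 C2 H \in state_space E.
Proof.
move=> SH cliqueC1 cliqueC2 swap_s; rewrite CS_relabel.
apply: relabel_state_space => // [e|e|e neq_e /orP []].
- exact: within2_swap.
- exact: within2_erev.
- exact: clique_complete cliqueC1 e neq_e.
- exact: clique_complete cliqueC2 e neq_e.
Qed.

Lemma CPK s C H : perm_on C s -> CP s^-1 C (CP s C H) = H.
Proof. by move=> onC; apply: relabelK => e; apply: within_perm_on. Qed.

Lemma CSK s C1 C2 H : s \in swap_perms C1 C2 -> CS s^-1 C1 C2 (CS s C1 C2 H) = H.
Proof. by move=> swap_s; rewrite !CS_relabel; apply: relabelK => e; apply: within2_swap. Qed.

Lemma CP1 C H : CP 1%g C H = H.
Proof.
have perm_edge1 : perm_edge (1 : {perm V}) =1 id by case=> u v; rewrite /perm_edge !perm1.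
by rewrite CP_relabel relabelE (eq_imset _ perm_edge1) imset_id setU_predC.
Qed.

Lemma swap_permsV C1 C2 s : s \in swap_perms C1 C2 -> (s^-1)%g \in swap_perms C1 C2.
Proof.
rewrite !inE => /and3P [onC sC1 sC2]; rewrite perm_onV //=.
have imV (A B : {set V}) : s @: A = B -> (s^-1)%g @: B = A.
  by move=> <-; rewrite -imset_comp (eq_imset _ (permK s)) imset_id.
by rewrite (imV _ _ (eqP sC1)) (imV _ _ (eqP sC2)) !eqxx.
Qed.

End CliqueMoves.

Section EdgeKernels.
Variables (R : realFieldType) (V : finType) (E : {set V * V}).
Hypothesis loopE : loopless E.
Local Notation S := (state_space E).
Implicit Types (H : {set V * V}) (e f : V * V).
Local Open Scope ring_scope.

Lemma T_SEF_ge0 H H' : 0 <= T_SEF R H H'.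
Proof. by rewrite /T_SEF; case: ifP => _; [exact: ler0n | exact: divr_ge0]. Qed.

Lemma sum_T_SEF H : H \in S -> \sum_(H' in S) T_SEF R H H' = 1.
Proof.
move=> SH; rewrite /T_SEF; case: (boolP (single_edges H == set0)) => [_|single_neq0].
  exact: sum_delta.
by apply: sum_fiber_ratios => // e; apply: SEF_state_space.
Qed.

Lemma T_SEF_sym H H' : H \in S -> H' \in S -> T_SEF R H H' = T_SEF R H' H.
Proof.
move=> SH SH'; rewrite /T_SEF -!cards_eq0 !(card_single_edges_state loopE) // {SH SH'}.
case: eqP => _; first by rewrite eq_sym.
congr (_%:R / _).
apply: (@card_swap_eq _ _ (fun H H' => [set e in single_edges H | SEF e H == H'])
  erev predT erev_inj) => // K K' e _ _.
rewrite in_set => /andP [e_single /eqP <-]; have [rev_single rev_back] := SEFK e_single.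
by rewrite in_set rev_single rev_back eqxx.
Qed.

Lemma T_SEF_gt0 H e : e \in single_edges H -> 0 < T_SEF R H (SEF e H).
Proof.
move=> e_single; rewrite /T_SEF; case: eqP => [single0|_]; first by rewrite single0 inE in e_single.
by apply: divr_gt0; rewrite ltr0n; apply/card_gt0P; exists e; rewrite // in_set e_single eqxx.
Qed.

Lemma T_DEM_ge0 H H' : 0 <= T_DEM R H H'.
Proof. by rewrite /T_DEM; case: ifP => _; [exact: ler0n | exact: divr_ge0]. Qed.

Lemma sum_T_DEM H : H \in S -> \sum_(H' in S) T_DEM R H H' = 1.
Proof.
move=> SH; rewrite /T_DEM; case: (boolP (_ || _)) => [_|]; first exact: sum_delta.
rewrite negb_or -!cards_eq0 => /andP [single_neq0 double_neq0]; rewrite -cardsX.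
apply: sum_fiber_ratios => [[e f]|].
  by rewrite in_setX => /andP [/= ? ?]; apply: DEM_state_space.
by rewrite -cards_eq0 cardsX muln_eq0 negb_or single_neq0.
Qed.

Definition erev_swap (ef : (V * V) * (V * V)) := (erev ef.2, erev ef.1).

Lemma erev_swapK : involutive erev_swap.
Proof. by case=> e f; rewrite /erev_swap /= !erevK. Qed.

Lemma T_DEM_sym H H' : H \in S -> H' \in S -> T_DEM R H H' = T_DEM R H' H.
Proof.
move=> SH SH'; rewrite /T_DEM -!cards_eq0.
rewrite !(card_single_edges_state loopE) // !(card_double_edges_state loopE) //.
case: ifP => _; first by rewrite eq_sym.
congr (_%:R / _); move: H H' SH SH'.
pose A H H' := [set ef in setX (single_edges H) (double_edges H) | DEM ef.1 ef.2 H == H'].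
apply: (@card_swap_eq _ _ A erev_swap (mem S) (inv_inj erev_swapK)) => K K' [e f] SK _.
rewrite in_set in_setX => /andP [/andP [e_single f_double] /eqP <-].
have [rf_single re_double back] := DEMK (state_space_loopless SK) e_single f_double.
by rewrite in_set in_setX rf_single re_double back eqxx.
Qed.

Lemma T_DEM_gt0 H e f : e \in single_edges H -> f \in double_edges H ->
  0 < T_DEM R H (DEM e f H).
Proof.
move=> e_single f_double; rewrite /T_DEM; case: ifP => [|_].
  by case/orP => /eqP empty; [move: e_single | move: f_double]; rewrite empty inE.
apply: divr_gt0; rewrite ltr0n ?muln_gt0.
  by apply/card_gt0P; exists (e, f); rewrite in_set in_setX e_single f_double eqxx.
by apply/andP; split; apply/card_gt0P; [exists e | exists f].
Qed.

End EdgeKernels.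

Section CliqueKernels.
Variables (R : realFieldType) (V : finType) (E : {set V * V}) (p : nat -> R).
Local Open Scope ring_scope.
Hypothesis p_ge0 : forall d, 0 <= p d.
Local Notation S := (state_space E).
Implicit Types (H : {set V * V}) (C : {set V}).

Lemma max_clique_of_sizeP H d C :
  C \in max_cliques_of_size H d -> is_clique H C /\ #|C| = d.
Proof. by rewrite inE => /andP [/andP [? _] /eqP]. Qed.

Lemma T_CP_ge0 H H' : 0 <= T_CP p H H'.
Proof.
apply: sumr_ge0 => d _; rewrite mulr_ge0 //; apply: sumr_ge0 => C _.
by rewrite mulr_ge0 ?invr_ge0 ?divr_ge0.
Qed.

Lemma T_CS_ge0 H H' : 0 <= T_CS p H H'.
Proof.
apply: sumr_ge0 => d _; rewrite mulr_ge0 //; apply: sumr_ge0 => C1 _; apply: sumr_ge0 => C2 _.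
by rewrite mulr_ge0 ?invr_ge0 ?exprn_ge0 ?divr_ge0.
Qed.

Lemma sum_T_CP H : H \in S -> \sum_(H' in S) T_CP p H H' =
  \sum_(d < #|V|.+1) p d * (max_cliques_of_size E d != set0)%:R.
Proof.
move=> SH; rewrite /T_CP exchange_big /=; apply: eq_bigr => d _.
rewrite -mulr_sumr -(max_cliques_state_space d SH) -sum_inv_card; congr (_ * _).
rewrite exchange_big /=; apply: eq_bigr => C HC.
rewrite -mulr_sumr sum_fiber_ratios ?mulr1 // => [s|].
  by rewrite inE; apply: CP_state_space SH (max_clique_of_sizeP HC).1.
by apply/set0Pn; exists 1%g; rewrite inE perm_on1.
Qed.

Lemma sum_T_CS H : H \in S -> \sum_(H' in S) T_CS p H H' =
  \sum_(d < #|V|.+1) p d * (max_cliques_of_size E d != set0)%:R.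
Proof.
move=> SH; rewrite /T_CS exchange_big /=; apply: eq_bigr => d _.
rewrite -mulr_sumr -(max_cliques_state_space d SH) -sum_inv_card2; congr (_ * _).
rewrite exchange_big /=; apply: eq_bigr => C1 HC1.
rewrite exchange_big /=; apply: eq_bigr => C2 HC2.
have [clique1 card1] := max_clique_of_sizeP HC1; have [clique2 card2] := max_clique_of_sizeP HC2.
rewrite -mulr_sumr sum_fiber_ratios ?mulr1 // => [s|]; first exact: CS_state_space.
by apply: swap_perms_neq0; rewrite card1 card2.
Qed.

Lemma T_CP_sym H H' : H \in S -> H' \in S -> T_CP p H H' = T_CP p H' H.
Proof.
move=> SH SH'; apply: eq_bigr => d _.
rewrite (max_cliques_state_space d SH) (max_cliques_state_space d SH'); congr (_ * _).
apply: eq_bigr => C _; congr (_ * (_%:R / _)); clear SH SH'.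
apply: (@card_swap_eq _ _ (fun H H' => [set s in perms_of C | CP s C H == H'])
  invg predT (@invg_inj {perm V})) => // K K' s _ _.
by rewrite !inE => /andP [onC /eqP <-]; rewrite perm_onV // CPK ?eqxx.
Qed.

Lemma T_CS_sym H H' : H \in S -> H' \in S -> T_CS p H H' = T_CS p H' H.
Proof.
move=> SH SH'; apply: eq_bigr => d _.
rewrite (max_cliques_state_space d SH) (max_cliques_state_space d SH'); congr (_ * _).
apply: eq_bigr => C1 _; apply: eq_bigr => C2 _; congr (_ * (_%:R / _)); clear SH SH'.
apply: (@card_swap_eq _ _ (fun H H' => [set s in swap_perms C1 C2 | CS s C1 C2 H == H'])
  invg predT (@invg_inj {perm V})) => // K K' s _ _.
rewrite [s \in _]inE => /andP [swap_s /eqP <-].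
by rewrite inE swap_permsV // CSK ?eqxx.
Qed.

Lemma T_CP_loop_gt0 H : H \in S ->
  (exists2 d : 'I_#|V|.+1, 0 < p d & max_cliques_of_size E d != set0) -> 0 < T_CP p H H.
Proof.
move=> SH [d pd_gt0]; rewrite -(max_cliques_state_space d SH) => /set0Pn [C HC].
have C_ge0 (d' : nat) C' : 0 <= #|max_cliques_of_size H d'|%:R^-1 *
    (#|[set s in perms_of C' | CP s C' H == H]|%:R / #|perms_of C'|%:R).
  by rewrite mulr_ge0 ?invr_ge0 ?divr_ge0.
apply: (psumr_gt0 (i := d)) => // [d' _|].
  by rewrite mulr_ge0 //; apply: sumr_ge0 => C' _; exact: C_ge0.
rewrite mulr_gt0 //; apply: (psumr_gt0 (i := C)) => //; rewrite mulr_gt0 //.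
  by rewrite invr_gt0 ltr0n card_gt0; apply/set0Pn; exists C.
have id_perm : (1%g : {perm V}) \in perms_of C by rewrite inE perm_on1.
by rewrite divr_gt0 // ltr0n; apply/card_gt0P; exists 1%g; rewrite // inE id_perm CP1 eqxx.
Qed.

End CliqueKernels.

Section UniformChain.
Variables (R : realFieldType) (V : finType) (E : {set V * V}).
Variables (pSEF pDEM pCP pCS : R) (p : nat -> R).
Local Open Scope ring_scope.
Hypothesis loopE : loopless E.
Hypotheses (pSEF_gt0 : 0 < pSEF) (pDEM_gt0 : 0 < pDEM) (pCP_gt0 : 0 < pCP) (pCS_gt0 : 0 < pCS).
Hypothesis p_ge0 : forall d, 0 <= p d.
Local Notation S := (state_space E).
Local Notation T := (T_u pSEF pDEM pCP pCS p).
Implicit Types (H : {set V * V}).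

Lemma T_u_terms_ge0 H H' :
  [/\ 0 <= pSEF * T_SEF R H H', 0 <= pDEM * T_DEM R H H',
      0 <= pCP * T_CP p H H' & 0 <= pCS * T_CS p H H'].
Proof.
by split; apply: mulr_ge0; rewrite ?T_SEF_ge0 ?T_DEM_ge0 ?(T_CP_ge0 p_ge0) ?(T_CS_ge0 p_ge0) ?ltW.
Qed.

Lemma T_u_ge0 H H' : 0 <= T H H'.
Proof. by have [? ? ? ?] := T_u_terms_ge0 H H'; rewrite !addr_ge0. Qed.

Lemma T_u_gt0 H H' :
  [|| 0 < T_SEF R H H', 0 < T_DEM R H H' | 0 < T_CP p H H'] -> 0 < T H H'.
Proof.
have [] := T_u_terms_ge0 H H'; rewrite /T_u.
set a := pSEF * _; set b := pDEM * _; set c := pCP * _; set d := pCS * _.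
move=> ? ? ? ?; case/or3P => [/(mulr_gt0 pSEF_gt0)|/(mulr_gt0 pDEM_gt0)|/(mulr_gt0 pCP_gt0)];
  rewrite -/a -/b -/c; lra.
Qed.

Lemma T_u_sym : {in S &, forall H H', T H H' = T H' H}.
Proof.
move=> H H' SH SH'; rewrite /T_u (T_SEF_sym R loopE SH SH') (T_DEM_sym R loopE SH SH').
by rewrite (T_CP_sym p SH SH') (T_CS_sym p SH SH').
Qed.

Lemma descent_step H H' : H \in S -> H' \in S -> H != H' ->
  exists2 H1, H1 \in S & (0 < T H H1) && (#|H1 :\: H'| < #|H :\: H'|)%N.
Proof.
move=> SH SH' neq_HH'.
have := SH; rewrite in_state_space => /and3P [_ /eqP prH /eqP cardH].
have := SH'; rewrite in_state_space => /and3P [_ /eqP prH' /eqP cardH'].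
have /pr_subsetP prHH' : pr H \subset pr H' by rewrite prH prH'.
have /pr_subsetP prH'H : pr H' \subset pr H by rewrite prH prH'.
have [a aH aNH'] : exists2 a, a \in H & a \notin H'.
  by apply/subsetPn; apply: contra neq_HH' => subHH'; rewrite eqEcard subHH' cardH cardH' leqnn.
have raH' : erev a \in H' by move: (prHH' a aH); rewrite (negbTE aNH').
have [raH|raNH] := boolP (erev a \in H); last first.
  have a_single : a \in single_edges H by rewrite in_single_edges aH raNH.
  exists (SEF a H); first exact: SEF_state_space.
  by rewrite T_u_gt0 ?T_SEF_gt0 //= SEF_replace_edge card_replace_edge_diff.
have [b bH' bNH] : exists2 b, b \in H' & b \notin H.
  apply/subsetPn; apply: contra neq_HH' => subH'H.
  by rewrite eq_sym eqEcard subH'H cardH cardH' leqnn.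
have rb_single : erev b \in single_edges H.
  by rewrite in_single_edges erevK bNH andbT; move: (prH'H b bH'); rewrite (negbTE bNH).
have a_double : a \in double_edges H by rewrite in_double_edges aH raH.
exists (DEM (erev b) a H); first exact: DEM_state_space.
by rewrite T_u_gt0 ?T_DEM_gt0 ?orbT //= DEM_replace_edge erevK card_replace_edge_diff.
Qed.

Lemma irreducible_T_u : irreducible S T.
Proof.
apply: (irreducible_by_descent (dist := fun H H' => #|H' :\: H|) T_u_ge0) => H H' SH SH' neq_HH'.
have [H1 SH1 /andP [T_H'H1 closer]] := descent_step SH' SH (contra_neq esym neq_HH').
by exists H1; rewrite // -T_u_sym // T_H'H1.
Qed.

Hypothesis p_sum : pSEF + pDEM + pCP + pCS = 1.
Hypothesis pd_sum : \sum_(d < #|V|.+1 | is_max_clique_size E d) p d = 1.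

Lemma clique_size_weights :
  \sum_(d < #|V|.+1) p d * (max_cliques_of_size E d != set0)%:R = 1.
Proof.
rewrite -[RHS]pd_sum [RHS]big_mkcond; apply: eq_bigr => d _.
by rewrite /is_max_clique_size; case: (max_cliques_of_size E d != set0); rewrite ?mulr1 ?mulr0.
Qed.

Lemma sum_T_u : {in S, forall H, \sum_(H' in S) T H H' = 1}.
Proof.
move=> H SH; rewrite /T_u !big_split /= -!mulr_sumr.
by rewrite sum_T_SEF // sum_T_DEM // sum_T_CP // sum_T_CS // clique_size_weights !mulr1.
Qed.

Lemma exists_clique_size : exists2 d : 'I_#|V|.+1, 0 < p d & max_cliques_of_size E d != set0.
Proof.
have sum_neq0 : \sum_(d < #|V|.+1 | is_max_clique_size E d) p d <> 0.
  by rewrite pd_sum; apply/eqP; exact: oner_neq0.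
have [d /andP [size_d pd_gt0]] := psumr_neq0P (fun (d : 'I_#|V|.+1) _ => p_ge0 d) sum_neq0.
by exists d.
Qed.

Lemma aperiodic_T_u : aperiodic S T.
Proof.
apply: aperiodic_of_loops => H SH; rewrite T_u_gt0 //.
by rewrite (T_CP_loop_gt0 p_ge0 SH exists_clique_size) !orbT.
Qed.

Lemma stationary_T_u : stationary S T (uniform_on R S).
Proof. exact: stationary_uniform T_u_sym sum_T_u. Qed.

End UniformChain.

Unset Implicit Arguments.
Local Open Scope ring_scope.

Theorem corollary3p11 (R : realFieldType) (V : finType) (E : {set V * V})
  (pSEF pDEM pCP pCS : R) (p : nat -> R) :
  loopless E ->
  double_edges E != set0 ->
  0 < pSEF -> 0 < pDEM -> 0 < pCP -> 0 < pCS ->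
  pSEF + pDEM + pCP + pCS = 1 ->
  (forall d, 0 <= p d) ->
  (forall d, ~~ is_max_clique_size E d -> p d = 0) ->
  \sum_(d < #|V|.+1 | is_max_clique_size E d) p d = 1 ->
  let S := state_space E in
  let T := T_u pSEF pDEM pCP pCS p in
  E \in S /\ ergodic S T /\ stationary S T (uniform_on R S).
Proof.
move=> loopE _ pSEF_gt0 pDEM_gt0 pCP_gt0 pCS_gt0 p_sum p_ge0 _ pd_sum S T.
split; first exact: state_space_refl.
split; last exact: stationary_T_u.
by split; [exact: irreducible_T_u | exact: aperiodic_T_u].
Qed.
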